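(* Let $X$ be a digraph and $S\subset V(X)$ such that every pair $x\notin S$, $y\in S$ joined by an arc (in either direction) forms a digon. Then $X$ and the digraph obtained from $X$ by replacing each such digon $\{x,y\}$ ($x\notin S$, $y\in S$) by the single arc $xy$ have the same $H$-spectrum.
   Context: A digraph $X$ has a finite vertex set and an arc set of ordered pairs of distinct vertices; $\{x,y\}$ is a digon if both $xy,yx$ are arcs. $H(X)$ has $(u,v)$-entry $1$ if $uv$ and $vu$ are arcs, $i$ if only $uv$ is an arc, $-i$ if only $vu$ is an arc, and $0$ otherwise; two digraphs have the same $H$-spectrum if their Hermitian adjacency matrices have the same characteristic polynomial. *)

From HB Require Import structures.
From mathcomp Require Import all_boot all_order all_algebra all_field.
Set Implicit Arguments. Unset Strict Implicit. Unset Printing Implicit Defensive.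
Import Order.TTheory GRing.Theory Num.Theory.
Local Open Scope ring_scope.

Definition digraph_rel (V : finType) (arc : rel V) : Prop := forall x, ~~ arc x x.

Definition hermAdj (V : finType) (arc : rel V) : 'M[algC]_#|V| :=
  \matrix_(i, j)
    let u := enum_val i in let v := enum_val j in
    if arc u v && arc v u then 1
    else if arc u v then 'i
    else if arc v u then - 'i
    else 0.

Definition same_H_spectrum (V : finType) (a1 a2 : rel V) : Prop :=
  char_poly (hermAdj a1) = char_poly (hermAdj a2).

(* Replace each digon {x,y} with x \notin S, y \in S by the single arc x y,
   i.e. delete the arcs y x going from S to outside S. *)
Definition reduce_digons (V : finType) (arc : rel V) (S : {set V}) : rel V :=
  fun u v => arc u v && ~~ ((u \in S) && (v \notin S)).

From HB Require Import structures.
From mathcomp Require Import all_boot all_order all_algebra all_field.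
Set Implicit Arguments. Unset Strict Implicit. Unset Printing Implicit Defensive.
Import Order.TTheory GRing.Theory Num.Theory.
Local Open Scope ring_scope.

(* Switching: conjugate H(X) by the unitary diagonal matrix D with entry [i] on S
   and [1] elsewhere.  In D^* H D the entries inside S or outside S are unchanged,
   an entry from S to the complement is multiplied by [-i] and one from the
   complement to S by [i].  By hypothesis these entries come from digons, i.e.
   equal [1], so they become [-i] and [i]: the entries of the single arc from the
   complement into S. *)

Lemma char_poly_conj (R : comNzRingType) n (P A Q : 'M[R]_n) :
  P *m Q = 1%:M -> char_poly (P *m A *m Q) = char_poly A.
Proof.
move=> PQ.
have char_mxE : char_poly_mx (P *m A *m Q) =
    map_mx polyC P *m char_poly_mx A *m map_mx polyC Q.
  rewrite /char_poly_mx mulmxBr mulmxBl !map_mxM; congr (_ - _).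
  by rewrite mul_mx_scalar -scalemxAl -map_mxM PQ map_scalar_mx scalemx1.
rewrite /char_poly char_mxE !det_mulmx mulrAC -det_mulmx -map_mxM PQ.
by rewrite map_scalar_mx det1 mul1r.
Qed.

Lemma char_poly_diag_conj (R : comNzRingType) n (d e : 'I_n -> R) (A : 'M[R]_n) :
  (forall i, d i * e i = 1) ->
  char_poly (\matrix_(i, j) (d i * A i j * e j)) = char_poly A.
Proof.
move=> de; pose D := diag_mx (\row_i d i); pose E := diag_mx (\row_i e i).
have DE : D *m E = 1%:M.
  apply/matrixP=> i j; rewrite mul_diag_mx !mxE.
  by case: (i =P j) => [->|_]; rewrite ?mulr0 //= de.
rewrite -(char_poly_conj A DE); congr char_poly.
by apply/matrixP=> i j; rewrite mul_mx_diag mul_diag_mx !mxE.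
Qed.

Section Switching.

Variables (V : finType) (arc : rel V) (S : {set V}).

Definition herm_entry (a : rel V) (u v : V) : algC :=
  if a u v && a v u then 1 else if a u v then 'i else if a v u then - 'i else 0.

Lemma hermAdjE (a : rel V) i j :
  hermAdj a i j = herm_entry a (enum_val i) (enum_val j).
Proof. by rewrite mxE. Qed.

Definition switch (v : V) : algC := if v \in S then 'i else 1.

Lemma conj_switchK v : (switch v)^* * switch v = 1.
Proof.
rewrite /switch; case: (v \in S); rewrite ?conjC1 ?mulr1 //.
by rewrite conjCi mulNr -expr2 sqrCi opprK.
Qed.

Hypothesis cut_digons :
  forall x y, x \notin S -> y \in S -> arc x y || arc y x -> arc x y && arc y x.

Lemma herm_entry_reduce_digons u v :
  herm_entry (reduce_digons arc S) u v = (switch u)^* * herm_entry arc u v * switch v.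
Proof.
rewrite /herm_entry /reduce_digons /switch.
case uS: (u \in S); case vS: (v \in S); rewrite /= ?andbT ?andbF ?conjC1 ?mulr1 ?mul1r.
- by rewrite conjCi mulrAC mulNr -expr2 sqrCi opprK mul1r.
- move: (cut_digons (negbT vS) uS); rewrite orbC conjCi.
  by case: (arc u v); case: (arc v u) => //= h; rewrite ?mulr0 ?mulr1 //; move: (h isT).
- move: (cut_digons (negbT uS) vS).
  by case: (arc u v); case: (arc v u) => //= h; rewrite ?mul0r ?mul1r //; move: (h isT).
- by [].
Qed.

End Switching.

Theorem proposition8p3 (V : finType) (arc : rel V) (S : {set V}) :
  digraph_rel arc ->
  (forall x y, x \notin S -> y \in S -> arc x y || arc y x -> arc x y && arc y x) ->
  same_H_spectrum arc (reduce_digons arc S).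
Proof.
(* Loops are harmless. *)
move=> _ cut_digons.
pose e (i : 'I_#|V|) := switch S (enum_val i).
have conj_eK i : (e i)^* * e i = 1 by exact: conj_switchK.
rewrite /same_H_spectrum -(char_poly_diag_conj (hermAdj arc) conj_eK).
congr char_poly; apply/matrixP=> i j.
by rewrite mxE !hermAdjE herm_entry_reduce_digons.
Qed.
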